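(* Assume $r(\boldsymbol\gamma)\le 1<2+\alpha\le R(\boldsymbol\gamma)$. Let $(\mathbf A^\ddagger,\mathbf q^\ddagger)$ maximize $\Pi$ over $\mathcal A\times\mathbb R^n_{\ge0}$, and let $(\mathbf A^{\rm d},\mathbf q^{\rm d})$ be an equilibrium with $\mathbf A^{\rm d}\mathbf q^{\rm d}=\boldsymbol\beta$ and $\mathbf q^{\rm d}=\boldsymbol\gamma/(2+\alpha)$. Then $\Omega(\mathbf A^{\rm d},\mathbf q^{\rm d})<\Omega(\mathbf A^\ddagger,\mathbf q^\ddagger)$ if and only if $\|\boldsymbol\gamma\|_2>\dfrac{2+\alpha}{\sqrt{4+3\alpha}}$.
   Context: Model: integers $n\ge2$, $m\ge2$; $\alpha>0$, $\boldsymbol\beta\in\mathbb R^m$ with $\|\boldsymbol\beta\|_2=1$, $\boldsymbol\gamma\in\mathbb R^n$ with all $\gamma_i>0$. $\mathcal A$ is the set of real $m\times n$ matrices $\mathbf A=[\mathbf a_1,\dots,\mathbf a_n]$ with all $\|\mathbf a_i\|_2=1$. With $\mathbf x=\mathbf A\mathbf q$: total surplus $\Omega(\mathbf A,\mathbf q)=\alpha(\mathbf x^\top\boldsymbol\beta-\tfrac12\mathbf x^\top\mathbf x)+\mathbf q^\top\boldsymbol\gamma-\tfrac12\mathbf q^\top\mathbf q$; aggregate profit $\Pi(\mathbf A,\mathbf q)=\alpha(\mathbf x^\top\boldsymbol\beta-\mathbf x^\top\mathbf x)+\mathbf q^\top\boldsymbol\gamma-\mathbf q^\top\mathbf q$.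 Oligopoly: firm $i$ chooses unit $\mathbf a_i$ and $q_i\ge0$ to maximize $\Pi_i=\alpha q_i\mathbf a_i^\top(\boldsymbol\beta-\sum_{j\ne i}q_j\mathbf a_j)-(1+\alpha)q_i^2+\gamma_iq_i$ given others; an equilibrium is a profile of mutual best responses. $R(\mathbf v)=\|\mathbf v\|_1$, $r(\mathbf v)=2\|\mathbf v\|_\infty-\|\mathbf v\|_1$. *)

From HB Require Import structures.
From mathcomp Require Import all_boot all_order all_algebra.
From mathcomp Require Import reals.
Set Implicit Arguments. Unset Strict Implicit. Unset Printing Implicit Defensive.
Import Order.TTheory GRing.Theory Num.Theory.
Local Open Scope ring_scope.

Section Model.
Variable R : realType.

Definition dotv {k : nat} (u v : 'cV[R]_k) : R := \sum_(i < k) u i 0 * v i 0.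

Definition norm2 {k : nat} (v : 'cV[R]_k) : R := Num.sqrt (dotv v v).
Definition norm1 {k : nat} (v : 'cV[R]_k) : R := \sum_(i < k) `|v i 0|.
Definition normInf {k : nat} (v : 'cV[R]_k) : R := \big[Num.max/0]_(i < k) `|v i 0|.

Definition Rfun {k : nat} (v : 'cV[R]_k) : R := norm1 v.
Definition rfun {k : nat} (v : 'cV[R]_k) : R := 2 * normInf v - norm1 v.

Definition unit_cols {m n : nat} (A : 'M[R]_(m, n)) : Prop :=
  forall i : 'I_n, dotv (col i A) (col i A) = 1.

Definition nonneg_vec {n : nat} (q : 'cV[R]_n) : Prop := forall i : 'I_n, 0 <= q i 0.

Definition Omega {m n : nat} (alpha : R) (beta : 'cV[R]_m) (gamma : 'cV[R]_n)
  (A : 'M[R]_(m, n)) (q : 'cV[R]_n) : R :=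
  let x := A *m q in
  alpha * (dotv x beta - 2^-1 * dotv x x) + dotv q gamma - 2^-1 * dotv q q.

Definition Pi {m n : nat} (alpha : R) (beta : 'cV[R]_m) (gamma : 'cV[R]_n)
  (A : 'M[R]_(m, n)) (q : 'cV[R]_n) : R :=
  let x := A *m q in
  alpha * (dotv x beta - dotv x x) + dotv q gamma - dotv q q.

Definition firm_profit {m n : nat} (alpha : R) (beta : 'cV[R]_m) (gamma : 'cV[R]_n)
  (A : 'M[R]_(m, n)) (q : 'cV[R]_n) (i : 'I_n) (a : 'cV[R]_m) (t : R) : R :=
  alpha * t * dotv a (beta - \sum_(j < n | j != i) q j 0 *: col j A)
  - (1 + alpha) * t ^+ 2 + gamma i 0 * t.

Definition equilibrium {m n : nat} (alpha : R) (beta : 'cV[R]_m) (gamma : 'cV[R]_n)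
  (A : 'M[R]_(m, n)) (q : 'cV[R]_n) : Prop :=
  unit_cols A /\ nonneg_vec q /\
  forall (i : 'I_n) (a : 'cV[R]_m) (t : R),
    dotv a a = 1 -> 0 <= t ->
    firm_profit alpha beta gamma A q i a t <= firm_profit alpha beta gamma A q i (col i A) (q i 0).

Definition Pi_maximizer {m n : nat} (alpha : R) (beta : 'cV[R]_m) (gamma : 'cV[R]_n)
  (A : 'M[R]_(m, n)) (q : 'cV[R]_n) : Prop :=
  unit_cols A /\ nonneg_vec q /\
  forall (A' : 'M[R]_(m, n)) (q' : 'cV[R]_n), unit_cols A' -> nonneg_vec q' ->
    Pi alpha beta gamma A' q' <= Pi alpha beta gamma A q.

End Model.

From HB Require Import structures.
From mathcomp Require Import all_boot all_order all_algebra.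
From mathcomp Require Import reals ring lra.
Import Order.TTheory GRing.Theory Num.Theory.
Local Open Scope ring_scope.

(** Completing the square shows that Pi is at most alpha/4 + |gamma|^2/4, with
    equality exactly when A q = beta/2 and q = gamma/2.  The bound is attained
    on the feasible set as soon as some A with unit columns maps gamma to beta:
    arrange the columns as unit vectors in a plane so that the polygon with
    sides gamma_i a_i closes up to a vector of length 1 (possible precisely
    when 2 max_i gamma_i - sum_i gamma_i <= 1 <= sum_i gamma_i), then reflect
    that vector onto beta.  Hence every maximizer of Pi has A q = beta/2 and
    q = gamma/2, and comparing the two surplus values reduces to
    (2 + alpha)^2 < |gamma|^2 (4 + 3 alpha). *)

Section DotProduct.
Context {R : realType} {k : nat}.
Implicit Types u v w : 'cV[R]_k.

Lemma dotvC u v : dotv u v = dotv v u.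
Proof. by apply: eq_bigr => i _; rewrite mulrC. Qed.

Lemma dotvDl u v w : dotv (u + v) w = dotv u w + dotv v w.
Proof. by rewrite /dotv -big_split; apply: eq_bigr => i _; rewrite !mxE mulrDl. Qed.

Lemma dotvZl a u w : dotv (a *: u) w = a * dotv u w.
Proof. by rewrite /dotv mulr_sumr; apply: eq_bigr => i _; rewrite !mxE mulrA. Qed.

Lemma dotvNl u w : dotv (- u) w = - dotv u w.
Proof. by rewrite -scaleN1r dotvZl mulN1r. Qed.

Lemma dotvBl u v w : dotv (u - v) w = dotv u w - dotv v w.
Proof. by rewrite dotvDl dotvNl. Qed.

Lemma dotvDr u v w : dotv w (u + v) = dotv w u + dotv w v.
Proof. by rewrite dotvC dotvDl !(dotvC w). Qed.

Lemma dotvBr u v w : dotv w (u - v) = dotv w u - dotv w v.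
Proof. by rewrite dotvC dotvBl !(dotvC w). Qed.

Lemma dotvZr a u w : dotv w (a *: u) = a * dotv w u.
Proof. by rewrite dotvC dotvZl dotvC. Qed.

Lemma dotv0l w : dotv 0 w = 0.
Proof. by rewrite -(scale0r 0) dotvZl mul0r. Qed.

Lemma dotv_ge0 u : 0 <= dotv u u.
Proof. by apply: sumr_ge0 => i _; rewrite -expr2 sqr_ge0. Qed.

Lemma dotv_eq0 u : dotv u u = 0 -> u = 0.
Proof.
move=> u0; apply/matrixP => i j; rewrite (ord1 j) mxE.
have sq0 : \sum_(i < k) u i 0 ^+ 2 = 0.
  by rewrite -[RHS]u0; apply: eq_bigr => ? _; rewrite expr2.
have /eqP := @psumr_eq0P _ _ xpredT _ (fun i _ => sqr_ge0 (u i 0)) sq0 i isT.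
by rewrite sqrf_eq0 => /eqP.
Qed.

Lemma dotv_mulmx u v : dotv u v = (u^T *m v) 0 0.
Proof. by rewrite mxE; apply: eq_bigr => i _; rewrite mxE. Qed.

Lemma sqr_norm2 u : norm2 u ^+ 2 = dotv u u.
Proof. exact/sqr_sqrtr/dotv_ge0. Qed.

Lemma dotv_delta (a b : 'I_k) :
  dotv (delta_mx a 0 : 'cV[R]_k) (delta_mx b 0) = (a == b)%:R.
Proof.
rewrite /dotv (bigD1 a) //= big1 ?addr0 => [|i /negPf ia]; last first.
  by rewrite !mxE ia mul0r.
by rewrite !mxE !eqxx mul1r andbT.
Qed.

End DotProduct.

Section Reflection.
Context {R : realType} {k : nat}.
Implicit Types u v w : 'cV[R]_k.

(** The Householder reflection in the hyperplane orthogonal to [w]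
    (the identity when [w = 0], since then [2 / 0 = 0]). *)
Definition reflection w : 'M[R]_k := 1%:M - (2 / dotv w w) *: (w *m w^T).

Lemma reflectionE w v : reflection w *m v = v - (2 / dotv w w * dotv w v) *: w.
Proof.
rewrite /reflection mulmxBl mul1mx -scalemxAl -mulmxA -scalerA.
congr (_ - _ *: _); apply/matrixP => i j.
by rewrite (ord1 j) !mxE big_ord1 mulrC dotv_mulmx.
Qed.

Lemma dotv_reflection w v :
  dotv (reflection w *m v) (reflection w *m v) = dotv v v.
Proof.
rewrite reflectionE !(dotvBl, dotvBr, dotvZl, dotvZr) (dotvC w v).
have [->|w_neq0] := eqVneq (dotv w w) 0; first by rewrite invr0 !mulr0 !mul0r !subr0.
by field.
Qed.

Lemma reflection_subv x b :
  dotv x x = 1 -> dotv b b = 1 -> reflection (x - b) *m x = b.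
Proof.
move=> x1 b1; rewrite reflectionE.
have [/dotv_eq0/eqP|nz] := eqVneq (dotv (x - b) (x - b)) 0.
  by rewrite subr_eq0 => /eqP ->; rewrite subrr scaler0 subr0.
have ww : dotv (x - b) (x - b) = 2 * (1 - dotv x b).
  by rewrite !(dotvBl, dotvBr) x1 b1 (dotvC b x); ring.
have wx : dotv (x - b) x = 1 - dotv x b by rewrite dotvBl x1 dotvC.
have -> : 2 / dotv (x - b) (x - b) * dotv (x - b) x = 1.
  by rewrite wx ww; field; apply: contra nz; rewrite ww => /eqP ->; rewrite mulr0.
by rewrite scale1r opprB addrC subrK.
Qed.

Lemma unit_cols_reflection {n : nat} w (A : 'M[R]_(k, n)) :
  unit_cols A -> unit_cols (reflection w *m A).
Proof. by move=> uA i; rewrite colE -mulmxA -colE dotv_reflection. Qed.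

End Reflection.

Section PlanarPolygon.
Context {R : rcfType}.

Lemma bigmax_le_sum n (l : 'I_n -> R) : (forall i, 0 <= l i) ->
  \big[Num.max/0]_(i < n) l i <= \sum_(i < n) l i.
Proof.
move=> l_ge0; apply: bigmax_le => [|i _]; first exact: sumr_ge0.
by rewrite (bigD1 i) //= lerDl sumr_ge0.
Qed.

(** [u] is [w / x] rotated by the angle of cosine [(L^2 - x^2 - l^2) / (2 x l)],
    so that the law of cosines yields the length [L]. *)
Lemma exists_unit_shift (x l L : R) (w : R * R) :
  0 <= x -> 0 < l -> w.1 ^+ 2 + w.2 ^+ 2 = x ^+ 2 ->
  `|x - l| <= L <= x + l ->
  exists u : R * R, u.1 ^+ 2 + u.2 ^+ 2 = 1 /\
    (l * u.1 + w.1) ^+ 2 + (l * u.2 + w.2) ^+ 2 = L ^+ 2.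
Proof.
case: w => X Y /= x_ge0 l_gt0 wx /andP[]; rewrite ler_norml => /andP[lo1 lo2] hi.
have [x0|x_neq0] := eqVneq x 0.
  have X0 : X = 0 by apply/eqP; rewrite -sqrf_eq0; apply/eqP; nra.
  have Y0 : Y = 0 by apply/eqP; rewrite -sqrf_eq0; apply/eqP; nra.
  exists (1, 0); rewrite /= X0 Y0 (_ : L = l); [split; ring | lra].
have x_gt0 : 0 < x by rewrite lt_def x_neq0.
pose c := (L ^+ 2 - x ^+ 2 - l ^+ 2) / (2 * x * l).
have c2 : c ^+ 2 <= 1.
  have : - 1 <= c <= 1 by rewrite /c ler_pdivlMr ?ler_pdivrMr; nra.
  by case/andP => ? ?; nra.
pose s := Num.sqrt (1 - c ^+ 2).
have s2 : s ^+ 2 = 1 - c ^+ 2 by rewrite sqr_sqrtr // subr_ge0.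
exists ((X * c - Y * s) / x, (Y * c + X * s) / x) => /=.
have u1 : ((X * c - Y * s) / x) ^+ 2 + ((Y * c + X * s) / x) ^+ 2 = 1.
  rewrite (_ : _ + _ = (X ^+ 2 + Y ^+ 2) * (c ^+ 2 + s ^+ 2) / x ^+ 2); last by field.
  by rewrite wx s2 (addrC (c ^+ 2)) subrK mulr1 divff // expf_neq0.
split=> //; rewrite (_ : _ + _ = (X ^+ 2 + Y ^+ 2) * (1 + 2 * l * c / x) +
  l ^+ 2 * (((X * c - Y * s) / x) ^+ 2 + ((Y * c + X * s) / x) ^+ 2)); last by field.
by rewrite u1 wx /c; field; rewrite x_neq0 gt_eqF.
Qed.

(** The length [x] to which the remaining sides must close so that both they
    and the last side [l] can be arranged. *)
Lemma exists_intermediate_radius (l M S L : R) :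
  0 < l -> M <= S -> 0 <= L ->
  2 * Num.max l M - (l + S) <= L -> L <= l + S ->
  exists x, [/\ 0 <= x, 2 * M - S <= x <= S & `|x - l| <= L <= x + l].
Proof.
move=> l_gt0 MS L_ge0 lo hi.
have [lM MM] : l <= Num.max l M /\ M <= Num.max l M by rewrite !le_max !lexx orbT.
have LlS : `|L - l| <= S by rewrite ler_norml; apply/andP; split; lra.
have LlL : `|L - l| <= L + l by rewrite ler_norml; apply/andP; split; lra.
pose x := Num.max 0 (Num.max (2 * M - S) `|L - l|).
have [x_ge0 Mx Lx] : [/\ 0 <= x, 2 * M - S <= x & `|L - l| <= x].
  by rewrite !le_max !lexx !orbT.
have xS : x <= S by rewrite !ge_max LlS !andbT; apply/andP; split; lra.
have xL : x <= L + l by rewrite !ge_max LlL !andbT; apply/andP; split; lra.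
exists x; split; rewrite ?Mx ?xL //.
move: Lx; rewrite !ler_norml => /andP[? ?]; apply/andP; split; lra.
Qed.

Lemma exists_closing_polygon n (l : 'I_n -> R) (L : R) :
  (forall i, 0 < l i) -> 0 <= L ->
  2 * \big[Num.max/0]_(i < n) l i - \sum_(i < n) l i <= L <= \sum_(i < n) l i ->
  exists v : 'I_n -> R * R, (forall i, (v i).1 ^+ 2 + (v i).2 ^+ 2 = 1) /\
    (\sum_(i < n) l i * (v i).1) ^+ 2 + (\sum_(i < n) l i * (v i).2) ^+ 2 = L ^+ 2.
Proof.
elim: n l L => [|n IH] l L l_gt0 L_ge0.
  rewrite !big_ord0 => /andP[? ?]; exists (fun=> (1, 0)).
  by split=> [i|]; rewrite ?big_ord0 /=; [ring | rewrite (_ : L = 0); [ring | lra]].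
rewrite !big_ord_recl => /andP[lo hi].
set l' := fun i => l (lift ord0 i) in lo hi.
have MS : \big[Num.max/0]_(i < n) l' i <= \sum_(i < n) l' i.
  by apply: bigmax_le_sum => i; exact/ltW/l_gt0.
have [x [x_ge0 xS step]] := exists_intermediate_radius _ _ _ _ (l_gt0 ord0) MS L_ge0 lo hi.
have [v [v1 vx]] := IH l' x (fun i => l_gt0 _) x_ge0 xS.
have [u [u1 uL]] := exists_unit_shift _ _ _ (_, _) x_ge0 (l_gt0 ord0) vx step.
exists (fun i => if unlift ord0 i is Some j then v j else u); split.
  by move=> i; case: unliftP => [j _|_]; [exact: v1 | exact: u1].
rewrite !big_ord_recl unlift_none -uL /=.
by congr ((_ + _) ^+ 2 + (_ + _) ^+ 2); apply: eq_bigr => i _; rewrite liftK.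
Qed.

End PlanarPolygon.

Section UnitColumns.
Context {R : realType} {m n : nat}.

Lemma dotv_orthonormal2 (d0 d1 : 'cV[R]_m) (a b c d : R) :
  dotv d0 d0 = 1 -> dotv d1 d1 = 1 -> dotv d0 d1 = 0 ->
  dotv (a *: d0 + b *: d1) (c *: d0 + d *: d1) = a * c + b * d.
Proof.
move=> d00 d11 d01.
by rewrite !(dotvDl, dotvDr, dotvZl, dotvZr) d00 d11 d01 (dotvC d1 d0) d01; ring.
Qed.

Lemma exists_unit_cols_mul_unit (gamma : 'cV[R]_n) :
  (2 <= m)%N -> (forall i, 0 < gamma i 0) -> rfun gamma <= 1 -> 1 <= Rfun gamma ->
  exists A : 'M[R]_(m, n), unit_cols A /\ dotv (A *m gamma) (A *m gamma) = 1.
Proof.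
move=> m2 g_gt0 r_le1 R_ge1.
have normE (F : R -> R -> R) (x : R) :
    \big[F/x]_(i < n) `|gamma i 0| = \big[F/x]_(i < n) gamma i 0.
  by apply: eq_bigr => i _; rewrite gtr0_norm.
have bounds : 2 * \big[Num.max/0]_(i < n) gamma i 0 - \sum_(i < n) gamma i 0 <= 1
    <= \sum_(i < n) gamma i 0.
  by move: r_le1 R_ge1; rewrite /rfun /Rfun /normInf /norm1 !normE => ? ?; apply/andP.
have [v [v1 vL]] := exists_closing_polygon _ _ _ g_gt0 ler01 bounds.
pose d0 : 'cV[R]_m := delta_mx (Ordinal (ltnW m2)) 0.
pose d1 : 'cV[R]_m := delta_mx (Ordinal m2) 0.
have [d00 d11 d01] : [/\ dotv d0 d0 = 1, dotv d1 d1 = 1 & dotv d0 d1 = 0].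
  by rewrite /d0 /d1 !dotv_delta !eqxx.
pose A := \matrix_(k, i) ((v i).1 * d0 k 0 + (v i).2 * d1 k 0).
have colA i : col i A = (v i).1 *: d0 + (v i).2 *: d1.
  by apply/matrixP => a b; rewrite (ord1 b) !mxE.
have Ag : A *m gamma = (\sum_i gamma i 0 * (v i).1) *: d0 + (\sum_i gamma i 0 * (v i).2) *: d1.
  apply/matrixP => a b; rewrite (ord1 b) !mxE !mulr_suml -big_split.
  by apply: eq_bigr => i _; rewrite !mxE /=; ring.
exists A; split=> [i|]; first by rewrite colA dotv_orthonormal2 // -!expr2 v1.
by rewrite Ag dotv_orthonormal2 // -!expr2 vL expr1n.
Qed.

Lemma exists_unit_cols_mul (beta : 'cV[R]_m) (gamma : 'cV[R]_n) :
  (2 <= m)%N -> dotv beta beta = 1 -> (forall i, 0 < gamma i 0) ->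
  rfun gamma <= 1 -> 1 <= Rfun gamma ->
  exists A : 'M[R]_(m, n), unit_cols A /\ A *m gamma = beta.
Proof.
move=> m2 b1 g_gt0 r_le1 R_ge1.
have [A [uA Ag1]] := exists_unit_cols_mul_unit gamma m2 g_gt0 r_le1 R_ge1.
exists (reflection (A *m gamma - beta) *m A); split; first exact: unit_cols_reflection.
by rewrite -mulmxA reflection_subv.
Qed.

End UnitColumns.

Section Surplus.
Context {R : realType} {m n : nat} {alpha : R} {beta : 'cV[R]_m} {gamma : 'cV[R]_n}.
Hypothesis beta1 : dotv beta beta = 1.

Lemma Pi_complete_square (A : 'M[R]_(m, n)) (q : 'cV[R]_n) :
  Pi alpha beta gamma A q = alpha / 4 + dotv gamma gamma / 4
    - alpha * dotv (A *m q - 2^-1 *: beta) (A *m q - 2^-1 *: beta)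
    - dotv (q - 2^-1 *: gamma) (q - 2^-1 *: gamma).
Proof.
rewrite /Pi !(dotvBl, dotvBr, dotvZl, dotvZr) beta1 (dotvC beta) (dotvC gamma q).
by field.
Qed.

Lemma Pi_maximizer_halves {A' A : 'M[R]_(m, n)} {q : 'cV[R]_n} :
  0 < alpha -> nonneg_vec gamma -> unit_cols A' -> A' *m gamma = beta ->
  Pi_maximizer alpha beta gamma A q ->
  A *m q = 2^-1 *: beta /\ q = 2^-1 *: gamma.
Proof.
move=> alpha_gt0 g_ge0 uA' A'g [_ [_ maxAq]].
have q'_ge0 : nonneg_vec (2^-1 *: gamma).
  by move=> i; rewrite mxE mulr_ge0 ?invr_ge0.
have := maxAq _ _ uA' q'_ge0.
rewrite !Pi_complete_square -scalemxAr A'g !subrr !dotv0l mulr0 !subr0.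
have := dotv_ge0 (A *m q - 2^-1 *: beta); have := dotv_ge0 (q - 2^-1 *: gamma).
set dx := dotv (A *m q - _) _; set dq := dotv (q - _) _ => dq_ge0 dx_ge0 le_opt.
have /dotv_eq0/subr0_eq -> : dx = 0 by nra.
by have /dotv_eq0/subr0_eq -> : dq = 0 by nra.
Qed.

Lemma Omega_scaled {A : 'M[R]_(m, n)} {q : 'cV[R]_n} {s t : R} :
  A *m q = s *: beta -> q = t *: gamma ->
  Omega alpha beta gamma A q = alpha * (s - s ^+ 2 / 2) + (t - t ^+ 2 / 2) * dotv gamma gamma.
Proof. by move=> Aq qE; rewrite /Omega /= Aq qE !(dotvZl, dotvZr) beta1; field. Qed.

End Surplus.

Lemma ltr_pdiv_sqrt (R : rcfType) (p q G : R) : 0 < p -> 0 < q -> 0 <= G ->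
  (p / Num.sqrt q < Num.sqrt G) = (p ^+ 2 < G * q).
Proof.
move=> p_gt0 q_gt0 G_ge0; have [->|G_neq0] := eqVneq G 0.
  by rewrite sqrtr0 mul0r !ltNge sqr_ge0 divr_ge0 ?sqrtr_ge0 ?ltW.
have G_gt0 : 0 < G by rewrite lt_def G_neq0.
rewrite ltr_pdivrMr ?sqrtr_gt0 // -sqrtrM // -[p in LHS]gtr0_norm // -sqrtr_sqr.
by rewrite ltr_sqrt // mulr_gt0.
Qed.

Lemma surplus_comparison (R : realFieldType) (a G : R) : 0 < a ->
  (a * (1 - 1 ^+ 2 / 2) + ((2 + a)^-1 - (2 + a)^-1 ^+ 2 / 2) * G <
   a * (2^-1 - 2^-1 ^+ 2 / 2) + (2^-1 - 2^-1 ^+ 2 / 2) * G)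
  = ((2 + a) ^+ 2 < G * (4 + 3 * a)).
Proof.
move=> a_gt0; have a2_gt0 : 0 < 2 + a by lra.
rewrite -subr_gt0 -[RHS]subr_gt0.
rewrite (_ : _ - _ = a / (8 * (2 + a) ^+ 2) * (G * (4 + 3 * a) - (2 + a) ^+ 2)).
  by rewrite pmulr_rgt0 // divr_gt0 // mulr_gt0 // exprn_gt0.
by field; rewrite gt_eqF.
Qed.

Theorem theorem2 (R : realType) (m n : nat) (alpha : R)
  (beta : 'cV[R]_m) (gamma : 'cV[R]_n)
  (Ad Add : 'M[R]_(m, n)) (qd qdd : 'cV[R]_n) :
  (2 <= n)%N -> (2 <= m)%N -> 0 < alpha -> norm2 beta = 1 ->
  (forall i : 'I_n, 0 < gamma i 0) ->
  rfun gamma <= 1 -> 1 < 2 + alpha -> 2 + alpha <= Rfun gamma ->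
  Pi_maximizer alpha beta gamma Add qdd ->
  equilibrium alpha beta gamma Ad qd ->
  Ad *m qd = beta -> qd = (2 + alpha)^-1 *: gamma ->
  (Omega alpha beta gamma Ad qd < Omega alpha beta gamma Add qdd <->
   (2 + alpha) / Num.sqrt (4 + 3 * alpha) < norm2 gamma).
Proof.
move=> _ m2 alpha_gt0 beta_unit g_gt0 r_le1 _ R_ge maxAq _ Adqd qdE.
have beta1 : dotv beta beta = 1 by rewrite -sqr_norm2 beta_unit expr1n.
have R_ge1 : 1 <= Rfun gamma by lra.
have [A' [uA' A'g]] := exists_unit_cols_mul beta gamma m2 beta1 g_gt0 r_le1 R_ge1.
have [Aq qE] := Pi_maximizer_halves beta1 alpha_gt0 (fun i => ltW (g_gt0 i)) uA' A'g maxAq.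
rewrite (Omega_scaled beta1 Aq qE).
rewrite (Omega_scaled beta1 (_ : Ad *m qd = 1 *: beta) qdE) ?scale1r //.
by rewrite /norm2 ltr_pdiv_sqrt ?dotv_ge0 ?surplus_comparison //; lra.
Qed.
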